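(* Let $X_1,\dots,X_r$ be independent random vectors in $\mathbb{R}^n$, and let $X$ be their coordinate-wise median (i.e. $X_j=\operatorname{median}_{i\in[r]}(X_i)_j$ for each coordinate $j$). Let $C>0$ and $p\ge 0$. If $\Pr[\|X_i\|_2<C]\ge 1-p$ for each $i$, then \[ \Pr[\|X\|_2<C\sqrt{3}]\ge 1-(11p)^{r/4}. \]
   Context: For even $r$ the median is the average of the two middle values. *)

From HB Require Import structures.
From mathcomp Require Import all_boot all_order all_algebra.
From mathcomp Require Import all_classical all_reals all_analysis.
Set Implicit Arguments. Unset Strict Implicit. Unset Printing Implicit Defensive.
Import Order.TTheory GRing.Theory Num.Theory.
Local Open Scope classical_set_scope.
Local Open Scope ring_scope.

(* Median of r real values: sort them; for odd r the middle value,
   for even r the average of the two middle values (r = 0 gives 0). *)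
Definition median (R : realType) (r : nat) (x : 'I_r -> R) : R :=
  let s := sort <=%R [seq x i | i <- enum 'I_r] in
  if odd r then nth 0 s r./2
  else (nth 0 s r./2.-1 + nth 0 s r./2) / 2.

Definition norm2 (R : realType) (n : nat) (v : 'rV[R]_n) : R :=
  Num.sqrt (\sum_(j < n) v 0 j ^+ 2).

Definition coord_median (R : realType) (n r : nat) (v : 'I_r -> 'rV[R]_n)
  : 'rV[R]_n := \row_(j < n) median (fun i => v i 0 j).

Definition random_vector d (T : measurableType d) (R : realType) (n : nat)
  (Y : T -> 'rV[R]_n) : Prop :=
  forall j : 'I_n, measurable_fun setT (fun t => Y t 0 j).

(* sigma-algebra on T generated by a random vector Y (= preimages of Borel
   sets of R^n, the Borel sigma-algebra of R^n being generated by the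
   coordinate projections) *)
Definition gen_sigma d (T : measurableType d) (R : realType) (n : nat)
  (Y : T -> 'rV[R]_n) : set (set T) :=
  <<s [set E | exists (j : 'I_n) (A : set R),
               measurable A /\ E = (fun t => Y t 0 j) @^-1` A] >>.

Definition mutually_independent d (T : measurableType d) (R : realType)
  (P : probability T R) (n r : nat) (X : 'I_r -> T -> 'rV[R]_n) : Prop :=
  forall E : 'I_r -> set T, (forall i, gen_sigma (X i) (E i)) ->
    P (\bigcap_(i in [set: 'I_r]) E i) = (\prod_(i < r) P (E i))%E.

(* Call an index i bad at t when |X_i(t)| >= C, let b be the number of bad
   indices and suppose 4b <= r.  For each coordinate j, at least half of the
   values X_i(t)_j have square at least m_j^2, where m_j is their median, and
   at least r/2 - b of these indices are good; summing over j gives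
   (r/2 - b) |X(t)|^2 <= sum_{i good} |X_i(t)|^2 < (r - b) C^2 <= 3 (r/2 - b) C^2.
   Hence |X(t)| >= C sqrt 3 forces some set of k = floor(r/4) + 1 indices to be
   simultaneously bad.  By independence and the union bound this has
   probability at most C(r, k) p^k <= (11 p)^k <= (11 p)^(r/4) when 11 p <= 1. *)

From HB Require Import structures.
From mathcomp Require Import all_boot all_order all_algebra.
From mathcomp Require Import all_classical all_reals all_analysis.
From mathcomp Require Import zify ring lra.
Import Order.TTheory GRing.Theory Num.Theory.
Local Open Scope classical_set_scope.
Local Open Scope ring_scope.

Set Implicit Arguments. Unset Strict Implicit.

Section OrderStatistics.
Variable R : realType.

(* The [homo] hypothesis says that [P] is downward closed. *)
Lemma nth_sorted_count (P : pred R) (s : seq R) (k : nat) :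
  sorted <=%R s -> {homo P : x y / y <= x >-> (x ==> y)%B} -> (k < size s)%N ->
  P (nth 0 s k) = (k < count P s)%N.
Proof.
move=> + Pdc; elim: s k => [//|x s IH] k /= srt ks.
have srt' : sorted <=%R s by apply: path_sorted srt.
have allx : all (>= x) s by apply: (order_path_min le_trans srt).
have cnt0 : ~~ P x -> count P s = 0%N.
  move=> nPx; apply/eqP; rewrite -leqn0 leqNgt -has_count; apply/hasPn => y ys.
  by apply: contra nPx => /(implyP (Pdc _ _ (allP allx y ys))).
case: k ks => [|k] ks /=.
  by case: (boolP (P x)) => Px //=; rewrite cnt0.
case: (boolP (P x)) => Px /=; first by rewrite add1n ltnS IH.
rewrite cnt0 // ltn0; apply/negbTE; apply: contra Px => Pn.
exact: (implyP (Pdc _ _ (allP allx _ (mem_nth 0 ks)))).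
Qed.

Definition kth (r : nat) (x : 'I_r -> R) (k : nat) : R :=
  nth 0 (sort <=%R [seq x i | i <- enum 'I_r]) k.

Variables (r : nat) (x : 'I_r -> R).

Lemma size_kth_seq : size (sort <=%R [seq x i | i <- enum 'I_r]) = r.
Proof. by rewrite size_sort size_map size_enum_ord. Qed.

Lemma kth_count (P : pred R) k : {homo P : a b / b <= a >-> (a ==> b)%B} ->
  (k < r)%N -> P (kth x k) = (k < #|[set i | P (x i)]%SET|)%N.
Proof.
move=> Pdc kr; rewrite /kth nth_sorted_count ?size_kth_seq //; last first.
  exact: (sort_sorted (@le_total _ R)).
by rewrite count_sort count_map cardsE -sum1_card -sum1_count enumT.
Qed.

Lemma kth_le_kth k l : (k <= l)%N -> (l < r)%N -> kth x k <= kth x l.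
Proof.
move=> kl lr; apply: (sorted_leq_nth le_trans lexx) => //.
- exact: (sort_sorted (@le_total _ R)).
- by rewrite inE size_kth_seq (leq_ltn_trans kl).
- by rewrite inE size_kth_seq.
Qed.

Lemma card_ge_kth k : (k < r)%N -> (r <= k + #|[set i | (kth x k <= x i)%R]%SET|)%N.
Proof.
move=> kr; have := kth_count (P := fun y => y < kth x k)
  (fun a b ba => introT implyP (le_lt_trans ba)) kr.
rewrite ltxx => /esym/negbT; rewrite -leqNgt => few_below.
have := cardsC [set i | x i < kth x k]%SET; rewrite card_ord.
have -> : ~: [set i | x i < kth x k]%SET = [set i | kth x k <= x i]%SET.
  by apply/finset.setP => i; rewrite !inE leNgt.
lia.
Qed.

Lemma card_le_kth k : (k < r)%N -> (k < #|[set i | (x i <= kth x k)%R]%SET|)%N.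
Proof.
move=> kr; rewrite -(kth_count (P := fun y => y <= kth x k)) //.
by move=> a b ba; apply/implyP/(le_trans ba).
Qed.

Lemma kth_le_median : (0 < r)%N -> kth x (r.-1)./2 <= median x.
Proof.
move=> r_gt0; rewrite /median -/(kth x _) -/(kth x _) -/(kth x _).
have hr := odd_double_half r.
case: (boolP (odd r)) hr => /= odd_r hr.
  by have -> : (r.-1)./2 = r./2 by lia.
have -> : (r.-1)./2 = r./2.-1 by lia.
have : kth x r./2.-1 <= kth x r./2 by apply: kth_le_kth; lia.
lra.
Qed.

Lemma median_le_kth : (0 < r)%N -> median x <= kth x r./2.
Proof.
move=> r_gt0; rewrite /median -/(kth x _) -/(kth x _) -/(kth x _).
have hr := odd_double_half r.
case: (odd r) hr => /= hr //.
have : kth x r./2.-1 <= kth x r./2 by apply: kth_le_kth; lia.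
lra.
Qed.

Lemma card_ge_median : (r <= 2 * #|[set i | (median x <= x i)%R]%SET|)%N.
Proof.
have [r0|r_gt0] := posnP r; first by rewrite {1}r0.
have half_lt : (r./2 < r)%N by lia.
have /subset_leq_card card_sub :
    [set i | kth x r./2 <= x i]%SET \subset [set i | median x <= x i]%SET.
  by apply/fintype.subsetP => i; rewrite !inE; apply/le_trans/median_le_kth.
have := card_ge_kth half_lt; lia.
Qed.

Lemma card_le_median : (r <= 2 * #|[set i | (x i <= median x)%R]%SET|)%N.
Proof.
have [r0|r_gt0] := posnP r; first by rewrite {1}r0.
have half_lt : ((r.-1)./2 < r)%N by lia.
have /subset_leq_card card_sub :
    [set i | x i <= kth x (r.-1)./2]%SET \subset [set i | x i <= median x]%SET.
  by apply/fintype.subsetP => i; rewrite !inE => /le_trans; apply; apply: kth_le_median.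
have := card_le_kth half_lt; lia.
Qed.

Lemma card_ge_median_sqr : (r <= 2 * #|[set i | (median x ^+ 2 <= x i ^+ 2)%R]%SET|)%N.
Proof.
have [m_ge0|m_lt0] := leP 0 (median x).
- apply: (leq_trans card_ge_median); rewrite leq_mul2l; apply/orP; right.
  apply/subset_leq_card/fintype.subsetP => i; rewrite !inE => m_le.
  by rewrite ler_sqr ?nnegrE // (le_trans m_ge0 m_le).
- apply: (leq_trans card_le_median); rewrite leq_mul2l; apply/orP; right.
  apply/subset_leq_card/fintype.subsetP => i; rewrite !inE => le_m.
  by rewrite -sqrrN -[x i ^+ 2]sqrrN ler_sqr ?nnegrE; lra.
Qed.

End OrderStatistics.

Section MedianBound.
Variable R : realType.

Lemma norm2_lt n (v : 'rV[R]_n) (c : R) :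
  0 < c -> (norm2 v < c) = (\sum_(j < n) v 0 j ^+ 2 < c ^+ 2).
Proof.
by move=> c_gt0; rewrite /norm2 -{1}(gtr0_norm c_gt0) -sqrtr_sqr ltr_sqrt ?exprn_gt0.
Qed.

Lemma norm2_ge n (v : 'rV[R]_n) (c : R) :
  0 < c -> (c <= norm2 v) = (c ^+ 2 <= \sum_(j < n) v 0 j ^+ 2).
Proof. by move=> c_gt0; rewrite !leNgt norm2_lt. Qed.

Lemma median_sqr_le_sum r (y : 'I_r -> R) (G : {set 'I_r}) :
  (r%:R / 2 - #|~: G|%:R) * median y ^+ 2 <= \sum_(i in G) y i ^+ 2.
Proof.
set m := median y; set A := [set i | (m ^+ 2 <= y i ^+ 2)%R]%SET.
have A_large : (r <= 2 * #|A|)%N := card_ge_median_sqr y.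
have A_split : (#|A| <= #|A :&: G| + #|~: G|)%N.
  rewrite -(cardsID G A) leq_add2l; apply/subset_leq_card.
  by rewrite finset.setDE finset.subsetIr.
have coef_le : r%:R / 2 - #|~: G|%:R <= #|A :&: G|%:R :> R.
  have : r%:R <= 2 * (#|A :&: G|%:R + #|~: G|%:R) :> R.
    by rewrite -natrD -natrM ler_nat; lia.
  lra.
apply: (le_trans (ler_wpM2r (sqr_ge0 m) coef_le)).
rewrite [leRHS](big_setID A) /= -[leLHS]addr0 lerD ?sumr_ge0 //; last first.
  by move=> i _; exact: sqr_ge0.
rewrite finset.setIC mulr_natl -sumr_const; apply: ler_sum => i.
by rewrite !inE => /andP [].
Qed.

Lemma norm2_coord_median_lt n r (v : 'I_r -> 'rV[R]_n) (C : R) :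
  (0 < r)%N -> 0 < C -> (4 * #|[set i | (C <= norm2 (v i))%R]%SET| <= r)%N ->
  norm2 (coord_median v) < C * Num.sqrt 3.
Proof.
move=> r_gt0 C_gt0 few_bad.
set G := [set i | (norm2 (v i) < C)%R]%SET.
have bad_le : 4 * #|~: G|%:R <= r%:R :> R.
  suff -> : ~: G = [set i | (C <= norm2 (v i))%R]%SET by rewrite -natrM ler_nat.
  by apply/finset.setP => i; rewrite !inE leNgt.
have card_G : #|G|%:R = r%:R - #|~: G|%:R :> R.
  have : (#|G| + #|~: G|)%N = r by rewrite cardsC card_ord.
  by move=> /(congr1 (GRing.natmul (1 : R))); rewrite natrD => <-; rewrite addrK.
have r_ge1 : 1 <= r%:R :> R by rewrite ler1n.
have coef_gt0 : 0 < r%:R / 2 - #|~: G|%:R :> R by lra.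
have [i0 i0G] : exists i0, i0 \in G.
  by apply/card_gt0P; rewrite -(ltr0n R) card_G; lra.
have sum_lt : (r%:R / 2 - #|~: G|%:R) * \sum_(j < n) median (fun i => v i 0 j) ^+ 2
    < #|G|%:R * C ^+ 2.
  rewrite mulr_sumr; apply: (le_lt_trans (ler_sum _ (fun j _ => median_sqr_le_sum _ G))).
  rewrite exchange_big /= mulr_natl -sumr_const; apply: ltr_sum.
    by apply/hasP; exists i0; rewrite ?mem_index_enum.
  by move=> i; rewrite inE -norm2_lt.
rewrite norm2_lt ?mulr_gt0 ?sqrtr_gt0 // exprMn sqr_sqrtr //.
under eq_bigr do rewrite mxE.
rewrite -(ltr_pM2l coef_gt0); apply: (lt_le_trans sum_lt).
rewrite card_G [C ^+ 2 * 3]mulrC [leRHS]mulrA; apply: ler_wpM2r; [exact: sqr_ge0 | lra].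
Qed.

End MedianBound.

Section MeasurableMedian.
Context d (T : measurableType d) (R : realType).

Lemma measurable_kth r (f : 'I_r -> T -> R) k :
  (forall i, measurable_fun setT (f i)) ->
  measurable_fun setT (fun t => kth (fun i => f i t) k).
Proof.
move=> mf; have [kr|rk] := ltnP k r; last first.
  by under eq_fun do rewrite /kth nth_default ?size_kth_seq //; exact: measurable_cst.
apply: (measurability _ (measurable_realfun.RGenInftyO.measurableE R)) => //.
move=> _ [_ [a ->] <-].
set below := fun t => \sum_(i < r) (if f i t < a then 1 else 0) : R.
have m_below : measurable_fun setT below.
  apply: measurable_sum => i; apply: measurable_fun_ifT => //.
  exact: measurable_realfun.measurable_fun_ltr.
have below_card t : below t = #|[set i | (f i t < a)%R]%SET|%:R.
  rewrite /below -big_mkcond /= sumr_const; congr (_ *+ _).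
  by apply: eq_card => i; rewrite inE.
have lt_a_dc : {homo (fun y => y < a) : y z / z <= y >-> (y ==> z)%B}.
  by move=> y z zy; apply/implyP/(le_lt_trans zy).
suff -> : (fun t => kth (fun i => f i t) k) @^-1` `]-oo, a[ = below @^-1` `]k%:R, +oo[.
  exact: m_below.
by apply/seteqP; split => t;
  rewrite /preimage /= !in_itv /= ?andbT below_card ltr_nat (kth_count _ lt_a_dc kr).
Qed.

Lemma measurable_median r (f : 'I_r -> T -> R) :
  (forall i, measurable_fun setT (f i)) ->
  measurable_fun setT (fun t => median (fun i => f i t)).
Proof.
move=> mf; rewrite /median; case: (odd r); first exact: measurable_kth.
apply: measurable_realfun.measurable_funM => //.
by apply: measurable_realfun.measurable_funD; apply: measurable_kth.
Qed.

End MeasurableMedian.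

Section GeneratedSigmaAlgebra.
Context d (T : measurableType d) (R : realType) (n : nat) (Y : T -> 'rV[R]_n).

Let coord_preimages := [set E | exists (j : 'I_n) (A : set R),
  measurable A /\ E = (fun t => Y t 0 j) @^-1` A].

Lemma gen_sigmaT : gen_sigma Y setT.
Proof. exact: (@measurableT _ (g_sigma_algebraType coord_preimages)). Qed.

Lemma gen_sigma_sumsqr (A : set R) : measurable A ->
  gen_sigma Y ((fun t => \sum_(j < n) Y t 0 j ^+ 2) @^-1` A).
Proof.
move=> mA; have m_coord j :
    measurable_fun (setT : set (g_sigma_algebraType coord_preimages)) (fun t => Y t 0 j).
  by move=> _ B mB; rewrite setTI; apply: sub_sigma_algebra; exists j, B.
have m_sum : measurable_fun (setT : set (g_sigma_algebraType coord_preimages))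
    (fun t => \sum_(j < n) Y t 0 j ^+ 2).
  by apply: measurable_sum => j; exact: measurable_realfun.measurable_funX.
by rewrite -[X in gen_sigma _ X]setTI; apply: m_sum.
Qed.

Lemma measurable_gen_sigma (E : set T) : random_vector Y -> gen_sigma Y E -> measurable E.
Proof.
move=> rvY; apply: smallest_sub; first exact: sigma_algebra_measurable.
by move=> _ [j [A [mA ->]]]; rewrite -[X in measurable X]setTI; apply: rvY.
Qed.

Lemma gen_sigma_norm2_lt (c : R) : 0 < c -> gen_sigma Y [set t | norm2 (Y t) < c].
Proof.
move=> c_gt0; have -> : [set t | norm2 (Y t) < c] =
    (fun t => \sum_(j < n) Y t 0 j ^+ 2) @^-1` `]-oo, c ^+ 2[.
  by apply/seteqP; split => t; rewrite /= in_itv /= norm2_lt.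
exact: gen_sigma_sumsqr.
Qed.

Lemma gen_sigma_norm2_ge (c : R) : 0 < c -> gen_sigma Y [set t | c <= norm2 (Y t)].
Proof.
move=> c_gt0; have -> : [set t | c <= norm2 (Y t)] =
    (fun t => \sum_(j < n) Y t 0 j ^+ 2) @^-1` `[c ^+ 2, +oo[.
  by apply/seteqP; split => t; rewrite /= in_itv /= andbT norm2_ge.
exact: gen_sigma_sumsqr.
Qed.

Lemma measurable_norm2_lt (c : R) :
  random_vector Y -> 0 < c -> measurable [set t | norm2 (Y t) < c].
Proof. by move=> rvY c_gt0; apply: measurable_gen_sigma rvY (gen_sigma_norm2_lt c_gt0). Qed.

End GeneratedSigmaAlgebra.

Lemma random_vector_coord_median d (T : measurableType d) (R : realType) n r
    (X : 'I_r -> T -> 'rV[R]_n) :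
  (forall i, random_vector (X i)) -> random_vector (fun t => coord_median (fun i => X i t)).
Proof.
move=> rvX j; under eq_fun do rewrite mxE.
by apply: measurable_median => i; exact: rvX.
Qed.

(* 'C(4k+4, k+1) = 4 'C(4k+3, k), and lowering the top entry from 4k+3 to 4k
   loses a factor at most 4/3 each time: the ratio is at most 256/27 < 11. *)
Lemma binS_mul4_le k : ('C(k.+1 * 4, k.+1) <= 11 * 'C(k * 4, k))%N.
Proof.
have e1 := mul_bin_diag (k * 4).+4 k.
have e2 := mul_bin_down (k * 4).+3 k.
have e3 := mul_bin_down (k * 4).+2 k.
have e4 := mul_bin_down (k * 4).+1 k.
rewrite /= in e1 e2 e3 e4.
have -> : (k.+1 * 4 = (k * 4).+4)%N by lia.
set c' := 'C((k * 4).+4, k.+1) in e1 *.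
set a3 := 'C((k * 4).+3, k) in e1 e2.
set a2 := 'C((k * 4).+2, k) in e2 e3.
set a1 := 'C((k * 4).+1, k) in e3 e4.
set c := 'C(k * 4, k) in e4 *.
have h1 : c' = (4 * a3)%N by nia.
have h2 : (3 * a3 <= 4 * a2)%N by nia.
have h3 : (3 * a2 <= 4 * a1)%N by nia.
have h4 : (3 * a1 <= 4 * c)%N by nia.
lia.
Qed.

Lemma bin_mul4_le k : ('C(k * 4, k) <= 11 ^ k)%N.
Proof.
elim: k => [//|k IH]; apply: leq_trans (binS_mul4_le k) _.
by rewrite expnS leq_mul2l IH orbT.
Qed.

Lemma bin_succ_div4_le r : ('C(r, (r %/ 4).+1) <= 11 ^ (r %/ 4).+1)%N.
Proof.
apply: leq_trans (bin_mul4_le _); apply: leq_bin2l.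
have := divn_eq r 4; have := ltn_pmod r (isT : (0 < 4)%N); lia.
Qed.

Lemma bin_succ_div4_tail_le (R : realType) r (p : R) : 0 <= p -> 11 * p <= 1 ->
  'C(r, (r %/ 4).+1)%:R * p ^+ (r %/ 4).+1 <= (11 * p) `^ (r%:R / 4).
Proof.
move=> p_ge0 p_small; set k := (r %/ 4).+1.
have [->|p_gt0] := eqVneq p 0; first by rewrite expr0n /= mulr0 powR_ge0.
have {p_gt0} p_gt0 : 0 < p by rewrite lt_def p_gt0.
apply: (@le_trans _ _ ((11 * p) ^+ k)).
  rewrite exprMn; apply: ler_wpM2r; first exact: exprn_ge0.
  by rewrite -natrX ler_nat; exact: bin_succ_div4_le.
rewrite -powR_mulrn ?mulr_ge0 //; apply: ger_powR; first by apply/andP; split; lra.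
have : (r < 4 * k)%N.
  by have := divn_eq r 4; have := ltn_pmod r (isT : (0 < 4)%N); rewrite /k; lia.
rewrite -(ltr_nat R) natrM; lra.
Qed.

Lemma exists_subset_card (I : finType) (A : {set I}) k :
  (k <= #|A|)%N -> exists2 S : {set I}, S \subset A & #|S| = k.
Proof.
elim: k => [|k IH] k_le; first by exists finset.set0; rewrite ?finset.sub0set ?cards0.
have [S SA cardS] := IH (ltnW k_le).
have /card_gt0P [x] : (0 < #|A :\: S|)%N.
  by rewrite cardsD (finset.setIidPr SA) cardS subn_gt0.
rewrite !inE => /andP [xS xA]; exists (x |: S); last by rewrite cardsU1 xS cardS.
by rewrite finset.subUset finset.sub1set xA SA.
Qed.

Lemma card_ge_bigsetU (I : finType) (U : Type) (B : I -> set U) k :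
  [set u | (k <= #|[set i | u \in B i]%SET|)%N] =
  \big[setU/set0]_(S : {set I} | #|S| == k) \bigcap_(i in [set` S]) B i.
Proof.
rewrite -(bigcup_pred [pred S : {set I} | #|S| == k]); apply/seteqP; split => u /=.
- move=> /exists_subset_card [S S_sub cardS]; exists S; first by rewrite /= inE cardS.
  by move=> i /= iS; have := fintype.subsetP S_sub i iS; rewrite inE => /set_mem.
- move=> [S /= /eqP <- inter]; apply/subset_leq_card/fintype.subsetP => i iS.
  by rewrite inE; apply/mem_set/inter.
Qed.

Lemma measure_bigsetU_le d (T : measurableType d) (R : realType)
    (mu : {measure set T -> \bar R}) (I : Type) (s : seq I) (Q : pred I) (F : I -> set T) :
  (forall i, measurable (F i)) ->
  (mu (\big[setU/set0]_(i <- s | Q i) F i) <= \sum_(i <- s | Q i) mu (F i))%E.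
Proof.
move=> mF; elim: s => [|i s IH]; first by rewrite !big_nil measure0.
rewrite !big_cons; case: (Q i) => //.
apply: le_trans (leeD (lexx _) IH); apply: measureU2 => //.
exact: bigsetU_measurable.
Qed.

Lemma probability_setC_geE d (T : measurableType d) (R : realType) (P : probability T R)
    (A : set T) (q : R) :
  measurable A -> ((1 - q)%:E <= P (~` A))%E = (P A <= q%:E)%E.
Proof.
move=> mA; rewrite probability_setC // -(fineK (fin_num_measure P _ mA)) -EFinB !lee_fin.
by rewrite lerD2l lerN2.
Qed.

Unset Implicit Arguments.

Section IndependentEvents.
Context {d : measure_display} {T : measurableType d} {R : realType} (P : probability T R).
Context {n r : nat} (X : 'I_r -> T -> 'rV[R]_n) (B : 'I_r -> set T) {p : R}.
Hypotheses (rvX : forall i, random_vector (X i)) (indepX : mutually_independent P X).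
Hypotheses (B_gen : forall i, gen_sigma (X i) (B i)) (PB_le : forall i, (P (B i) <= p%:E)%E).

Let mB i : measurable (B i) := measurable_gen_sigma (rvX i) (B_gen i).

Let measurable_bigcap (S : {set 'I_r}) : measurable (\bigcap_(i in [set` S]) B i).
Proof. by apply: fin_bigcap_measurable => // i _; exact: mB. Qed.

Lemma prob_bigcap_le (S : {set 'I_r}) :
  (P (\bigcap_(i in [set` S]) B i) <= (p ^+ #|S|)%:E)%E.
Proof.
pose E i := if i \in S then B i else setT.
have E_gen i : gen_sigma (X i) (E i).
  by rewrite /E; case: ifP => _; [exact: B_gen | exact: gen_sigmaT].
have -> : \bigcap_(i in [set` S]) B i = \bigcap_(i in [set: 'I_r]) E i.
  apply/seteqP; split => t inter i /= iS.
    by rewrite /E; case: ifP => // {}iS; apply: inter.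
  by have := inter i I; rewrite /E iS.
have mE i : measurable (E i) by rewrite /E; case: ifP.
rewrite indepX // (eq_bigr (fun i => (fine (P (E i)))%:E)); last first.
  by move=> i _; rewrite fineK // fin_num_measure.
rewrite prodEFin lee_fin -prodr_const [leRHS]big_mkcond /=.
apply: ler_prod => i _; rewrite fine_ge0 ?measure_ge0 // /E.
case: ifP => _; last by rewrite probability_setT /=.
by rewrite /= -lee_fin fineK ?fin_num_measure.
Qed.

Lemma prob_card_ge_le k :
  (P [set t | (k <= #|[set i | t \in B i]%SET|)%N] <= ('C(r, k)%:R * p ^+ k)%:E)%E.
Proof.
rewrite card_ge_bigsetU; apply: le_trans (measure_bigsetU_le P _ _ measurable_bigcap) _.
have -> : ('C(r, k)%:R * p ^+ k)%:E = \sum_(S : {set 'I_r} | #|S| == k) (p ^+ k)%:E.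
  rewrite sumEFin (eq_bigl (fun S => S \in [set S : {set 'I_r} | #|S| == k]%SET)) => [|S].
    by rewrite sumr_const card_draws card_ord mulr_natl.
  by rewrite inE.
by apply: lee_sum => S /eqP <-; exact: prob_bigcap_le.
Qed.

Lemma measurable_card_ge k : measurable [set t | (k <= #|[set i | t \in B i]%SET|)%N].
Proof.
by rewrite card_ge_bigsetU; apply: bigsetU_measurable => S _.
Qed.

Lemma setC_card_ge k : ~` [set t | (k <= #|[set i | t \in B i]%SET|)%N] =
  [set t | (#|[set i | t \in B i]%SET| < k)%N].
Proof. by apply/seteqP; split => t /=; rewrite ltnNge => /negP. Qed.

Lemma measurable_card_lt k : measurable [set t | (#|[set i | t \in B i]%SET| < k)%N].
Proof. by rewrite -setC_card_ge; apply/measurableC/measurable_card_ge. Qed.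

Lemma prob_card_lt_ge k :
  ((1 - 'C(r, k)%:R * p ^+ k)%:E <= P [set t | (#|[set i | t \in B i]%SET| < k)%N])%E.
Proof.
rewrite -setC_card_ge probability_setC_geE.
  exact: prob_card_ge_le.
exact: measurable_card_ge.
Qed.

End IndependentEvents.

Theorem lemma6p2 (d : measure_display) (T : measurableType d) (R : realType)
  (P : probability T R) (n r : nat) (X : 'I_r -> T -> 'rV[R]_n)
  (C p : R) :
  (forall i, random_vector (X i)) ->
  mutually_independent P X ->
  0 < C -> 0 <= p ->
  (forall i, ((1 - p)%:E <= P [set t | (norm2 (X i t) < C)%R])%E) ->
  (((1 - (11 * p) `^ (r%:R / 4))%:E
     <= P [set t | (norm2 (coord_median (fun i => X i t)) < C * Num.sqrt 3)%R])%E).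
Proof.
move=> rvX indepX C_gt0 p_ge0 P_good.
have [r0|r_gt0] := posnP r; first by subst r; rewrite mul0r powRr0 subrr measure_ge0.
have [p_large|p_small] := ltP 1 (11 * p).
  apply: le_trans (measure_ge0 _ _); rewrite lee_fin subr_le0.
  by rewrite -[leLHS](powRr0 (11 * p)) ler_powR ?divr_ge0 // ltW.
pose B i := [set t | C <= norm2 (X i t)].
have B_gen i : gen_sigma (X i) (B i) by exact: gen_sigma_norm2_ge.
have PB_le i : (P (B i) <= p%:E)%E.
  rewrite -probability_setC_geE; last exact: measurable_gen_sigma (rvX i) (B_gen i).
  suff -> : ~` B i = [set t | norm2 (X i t) < C] by exact: P_good.
  by apply/seteqP; split => t /=; rewrite ltNge => /negP.
set k := (r %/ 4).+1.
have few_sub : [set t | (#|[set i | t \in B i]%SET| < k)%N] `<=`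
    [set t | norm2 (coord_median (fun i => X i t)) < C * Num.sqrt 3].
  move=> t /= few_bad; apply: norm2_coord_median_lt => //.
  suff <- : [set i | t \in B i]%SET = [set i | (C <= norm2 (X i t))%R]%SET.
    move: few_bad; rewrite /k; set b := #|_|; lia.
  by apply/finset.setP => i; rewrite !inE; apply/idP/idP => [/set_mem|/mem_set].
apply: le_trans (le_measure P _ _ few_sub); last 2 first.
- by rewrite inE; exact: measurable_card_lt X B rvX B_gen k.
- rewrite inE; apply: measurable_norm2_lt; first exact: random_vector_coord_median.
  by rewrite mulr_gt0 ?sqrtr_gt0.
apply: le_trans (prob_card_lt_ge P X B rvX indepX B_gen PB_le k).
by rewrite lee_fin lerB // bin_succ_div4_tail_le.
Qed.
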